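(* Let $\hat A$ be a complete discrete valuation ring with maximal ideal $\mathfrak p$, let $n$ be a positive integer, and let $H_n$ be the ideal of $\hat A$ generated by all $x^n-1$ with $x\in\hat A^\times$. Then an ideal $I$ of $\hat A$ is $n$-congruing if and only if $H_n\subseteq I$.
   Context: An ideal $I$ of a commutative ring $R$ is $n$-congruing if for every $a\in R$ there is $N\in\mathbb{N}$ with $a^N(a^n-1)\in I$. *)

From HB Require Import structures.
From mathcomp Require Import all_boot all_order all_algebra.
Set Implicit Arguments. Unset Strict Implicit. Unset Printing Implicit Defensive.
Import GRing.Theory.
Local Open Scope ring_scope.

Definition is_ideal (R : comNzRingType) (I : R -> Prop) : Prop :=
  [/\ I 0,
      (forall x y, I x -> I y -> I (x + y)) &
      (forall r x, I x -> I (r * x))].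

Definition n_congruing (R : comNzRingType) (n : nat) (I : R -> Prop) : Prop :=
  forall a : R, exists N : nat, I (a ^+ N * (a ^+ n - 1)).

(* The ideal H_n generated by all x^n - 1 with x a unit: the set of finite
   R-linear combinations  sum_i c_i (x_i^n - 1)  with all x_i units. *)
Definition H_ideal (R : comUnitRingType) (n : nat) (y : R) : Prop :=
  exists s : seq (R * R),
    all (fun cx => cx.2 \is a GRing.unit) s /\
    y = \sum_(cx <- s) cx.1 * (cx.2 ^+ n - 1).

(* Discrete valuation ring, via a uniformizer: a nonzero nonunit p such that
   every nonzero element is (unit) * p^k.  The maximal ideal is then pR. *)
Definition is_uniformizer (R : idomainType) (p : R) : Prop :=
  [/\ p != 0, p \isn't a GRing.unit &
      forall x : R, x != 0 ->
        exists (u : R) (k : nat), u \is a GRing.unit /\ x = u * p ^+ k].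

Definition in_pow_ideal (R : comNzRingType) (p : R) (k : nat) (x : R) : Prop :=
  exists c : R, x = c * p ^+ k.

(* Completeness for the p-adic (= maximal-ideal-adic) topology:
   every p-adically Cauchy sequence converges p-adically. *)
Definition padic_complete (R : comNzRingType) (p : R) : Prop :=
  forall a : nat -> R,
    (forall k : nat, exists N : nat, forall m l : nat,
        (N <= m)%N -> (N <= l)%N -> in_pow_ideal p k (a m - a l)) ->
    exists L : R, forall k : nat, exists N : nat, forall m : nat,
        (N <= m)%N -> in_pow_ideal p k (a m - L).

Definition complete_DVR (R : idomainType) : Prop :=
  exists p : R, is_uniformizer p /\ padic_complete p.

(** For a unit [x], [x^n - 1 = x^-N * (x^N (x^n - 1))], so an [n]-congruing
    ideal contains every generator of [H_n].  Conversely, [H_n] is not zero: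
    the units [1 + p^(j+1)] are pairwise distinct and [X^n - 1] has at most [n]
    roots, so some [x^n - 1 = u p^m] with [u] a unit, and [p^m] lies in [I].  A
    non-unit [a] is a multiple of [p], so [a^m] lies in [p^m] and in [I], while
    for a unit [a] the element [a^n - 1] itself lies in [H_n]. *)
From HB Require Import structures.
From mathcomp Require Import all_boot all_order all_algebra.
Set Implicit Arguments.
Unset Strict Implicit.
Unset Printing Implicit Defensive.

Import GRing.Theory.
Local Open Scope ring_scope.

Section Ideals.
Variables (R : comUnitRingType) (n : nat) (I : R -> Prop).
Hypothesis hI : is_ideal I.

Lemma H_ideal_unit (x : R) : x \is a GRing.unit -> H_ideal n (x ^+ n - 1).
Proof.
move=> xU; exists [:: (1, x)]; split; first by rewrite /= xU.
by rewrite big_seq1 mul1r.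
Qed.

Lemma H_ideal_sub :
  (forall x : R, x \is a GRing.unit -> I (x ^+ n - 1)) ->
  forall y : R, H_ideal n y -> I y.
Proof.
case: hI => I0 ID IM hgen y [s [sU ->]].
elim: s sU => [|[c x] s IHs] /=; first by rewrite big_nil.
by case/andP=> xU sU; rewrite big_cons; apply: ID (IHs sU); apply/IM/hgen.
Qed.

Lemma n_congruing_unit (x : R) :
  n_congruing n I -> x \is a GRing.unit -> I (x ^+ n - 1).
Proof.
case: hI => _ _ IM hc xU; have [N hN] := hc x.
by rewrite -(mulKr (unitrX N xU) (x ^+ n - 1)); apply: IM.
Qed.

End Ideals.

Section Uniformizer.
Variables (R : idomainType) (p : R).
Hypothesis hp : is_uniformizer p.

Lemma uniformizer_neq0 : p != 0. Proof. by case: hp. Qed.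

Lemma uniformizer_nonunit : p \isn't a GRing.unit. Proof. by case: hp. Qed.

Lemma mul_uniformizer_neq1 (y : R) : p * y != 1.
Proof.
apply: contra uniformizer_nonunit => /eqP pyE.
by apply/unitrPr; exists y.
Qed.

Lemma nonunit_uniformizer_dvd (a : R) :
  a \isn't a GRing.unit -> exists v : R, a = v * p.
Proof.
move=> aNU; have [->|a0] := eqVneq a 0; first by exists 0; rewrite mul0r.
case: hp => _ _ hfac; have [u [[|k] [uU aE]]] := hfac a a0.
  by move: aNU; rewrite aE expr0 mulr1 uU.
by exists (u * p ^+ k); rewrite aE exprSr mulrA.
Qed.

Lemma unit_1_plus_uniformizer_mul (c : R) : 1 + p * c \is a GRing.unit.
Proof.
apply: contraT => hNU; have [v vE] := nonunit_uniformizer_dvd hNU.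
by move/eqP: (mul_uniformizer_neq1 (v - c)); rewrite mulrBr mulrC -vE addrK.
Qed.

Lemma uniformizer_expr_inj : injective (GRing.exp p).
Proof.
move=> i j; wlog le_ij : i j / (i <= j)%N => [hwlog e|].
  by case: (leqP i j) => [|/ltnW] le; [apply: hwlog | apply/esym/hwlog].
rewrite -(subnKC le_ij) exprD -[p ^+ i in LHS]mulr1.
move=> /(mulfI (expf_neq0 _ uniformizer_neq0)).
case: (j - i)%N => [|d] pdE; first by rewrite addn0.
by move: uniformizer_nonunit; rewrite -(unitrX_pos p (ltn0Sn d)) -pdE unitr1.
Qed.

Lemma exists_unit_expr_neq1 (n : nat) : (0 < n)%N ->
  exists x : R, x \is a GRing.unit /\ x ^+ n - 1 != 0.
Proof.
move=> n0; pose xs := [seq 1 + p ^+ j.+1 | j <- iota 0 n.+1].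
have Xn1_neq0 : 'X^n - (1 : R)%:P != 0 by rewrite -size_poly_eq0 size_XnsubC.
have [allRoots|] := boolP (all (root ('X^n - 1%:P)) xs).
  have xsU : uniq xs.
    by rewrite map_inj_uniq ?iota_uniq // => i j /addrI /uniformizer_expr_inj [].
  have := max_poly_roots Xn1_neq0 allRoots xsU.
  by rewrite size_XnsubC // size_map size_iota ltnn.
case/allPn=> _ /mapP [j _ ->]; rewrite /root !hornerE => hNroot.
by exists (1 + p ^+ j.+1); split; rewrite // exprS unit_1_plus_uniformizer_mul.
Qed.

Lemma ideal_neq0_uniformizer_expr (I : R -> Prop) (y : R) :
  is_ideal I -> I y -> y != 0 -> exists m : nat, forall c : R, I (c * p ^+ m).
Proof.
case=> _ _ IM Iy y0; case: hp => _ _ hfac; have [u [m [uU yE]]] := hfac y y0.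
by exists m => c; rewrite -(mulKr uU (p ^+ m)) [c * _]mulrA -yE; apply: IM.
Qed.

Lemma n_congruing_of_H_sub (n : nat) (I : R -> Prop) :
  (0 < n)%N -> is_ideal I -> (forall y : R, H_ideal n y -> I y) ->
  n_congruing n I.
Proof.
move=> n0 hI hH; have IU x : x \is a GRing.unit -> I (x ^+ n - 1).
  by move=> xU; apply/hH/H_ideal_unit.
have [x [xU x0]] := exists_unit_expr_neq1 n0.
have [m Ipm] := ideal_neq0_uniformizer_expr hI (IU x xU) x0.
move=> a; have [aU|aNU] := boolP (a \is a GRing.unit).
  by exists 0%N; rewrite mul1r; apply: IU.
have [v ->] := nonunit_uniformizer_dvd aNU.
by exists m; rewrite exprMn mulrAC; apply: Ipm.
Qed.

End Uniformizer.

Theorem mainTheorem12 (R : idomainType) (hR : complete_DVR R)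
  (n : nat) (hn : (0 < n)%N) (I : R -> Prop) (hI : is_ideal I) :
  n_congruing n I <-> (forall y : R, H_ideal n y -> I y).
Proof.
have [p [hp _]] := hR; split=> [hc | hH].
  by apply: H_ideal_sub => // x; apply: n_congruing_unit.
exact: (n_congruing_of_H_sub hp hn hI hH).
Qed.
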